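(* Let $\theta_1,\dots,\theta_{10}$ be real numbers such that $0<\theta_i<\theta_j<\theta_k<180$ for each of the triples $(i,j,k)\in\{(2,4,6),(1,5,9),(1,5,10),(1,5,7),(1,3,7),(1,4,7),(3,5,8),(2,8,9),(6,7,10)\}$, and write $s_{ij}=\sin(\theta_j-\theta_i)$. Then the $8\times 7$ matrix $$S_8=\begin{pmatrix} 0&-s_{58}&0&0&-s_{35}&0&0\\ -s_{89}&0&0&0&s_{29}&-s_{28}&0\\ s_{46}&0&-s_{26}&s_{24}&0&0&0\\ 0&0&0&-s_{7,10}&0&0&-s_{67}\\ 0&s_{17}&0&0&0&0&0\\ 0&0&s_{17}&0&0&0&0\\ 0&0&0&0&0&s_{15}&0\\ 0&0&0&0&0&0&s_{15} \end{pmatrix}$$ is a simplex.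
   Context: Angles are in degrees. A real matrix with $r+1$ rows and $r$ columns is called a simplex if, up to multiplication by a constant, there is precisely one positive linear dependency between its rows, i.e. there is a linear dependency among the rows with all coefficients strictly positive, and every linear dependency among the rows is a scalar multiple of it. (The columns of $S_8$ correspond to the unknowns $r_2,r_3,r_4,r_6,r_8,r_9,r_{10}$ in the triangle inequalities of a ten-line arrangement.) *)

From mathcomp Require Import all_boot all_order all_algebra.
From mathcomp Require Import reals trigo.
Set Implicit Arguments. Unset Strict Implicit. Unset Printing Implicit Defensive.
Import Order.TTheory GRing.Theory Num.Theory.
Local Open Scope ring_scope.

Definition sind {R : realType} (x : R) : R := sin (x * pi / 180).

(* s_{ij} = sin(theta_j - theta_i), angles in degrees; theta indexed by 1..10 *)
Definition sij {R : realType} (theta : nat -> R) (i j : nat) : R :=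
  sind (theta j - theta i).

Definition is_simplex {R : realType} (r : nat) (M : 'M[R]_(r.+1, r)) : Prop :=
  exists c : 'rV[R]_(r.+1),
    (forall i, 0 < c ord0 i) /\ c *m M = 0 /\
    (forall d : 'rV[R]_(r.+1), d *m M = 0 -> exists t : R, d = t *: c).

(* the 8 x 7 matrix S_8 (rows and columns numbered from 0) *)
Definition S8_entry {R : realType} (theta : nat -> R) (i j : nat) : R :=
  let s := sij theta in
  match i, j with
  | 0, 1 => - s 5 8
  | 0, 4 => - s 3 5
  | 1, 0 => - s 8 9
  | 1, 4 => s 2 9
  | 1, 5 => - s 2 8
  | 2, 0 => s 4 6
  | 2, 2 => - s 2 6
  | 2, 3 => s 2 4
  | 3, 3 => - s 7 10
  | 3, 6 => - s 6 7
  | 4, 1 => s 1 7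
  | 5, 2 => s 1 7
  | 6, 5 => s 1 5
  | 7, 6 => s 1 5
  | _, _ => 0
  end.

Definition S8 {R : realType} (theta : nat -> R) : 'M[R]_(8, 7) :=
  \matrix_(i < 8, j < 7) S8_entry theta i j.

Definition S8_triples : seq (nat * nat * nat) :=
  [:: (2,4,6); (1,5,9); (1,5,10); (1,5,7); (1,3,7); (1,4,7); (3,5,8); (2,8,9); (6,7,10)]%N.

(* Each column of S_8 has exactly two nonzero entries, of opposite signs once
   the angle conditions make all the sines involved positive.  A row dependency
   is therefore a system of seven equations x_q s = x_p s' with s, s' > 0, one
   per column, and the pairs (p, q) form a spanning tree of the eight rows.
   Propagating from row 0 along the tree, x_0 determines every x_q, and x_0 = 1
   gives a dependency with positive coefficients; so the dependencies form a
   line spanned by a positive vector. *)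
From mathcomp Require Import all_boot all_order all_algebra.
From mathcomp Require Import reals trigo.
From mathcomp Require Import lra.
Import Order.TTheory GRing.Theory Num.Theory.
Local Open Scope ring_scope.

Lemma sind_gt0 (R : realType) (x : R) : 0 < x < 180 -> 0 < sind x.
Proof.
case/andP=> x_gt0 x_lt180; apply: sin_gt0_pi; have pi_gt0 := @pi_gt0 R.
rewrite divr_gt0 ?mulr_gt0 //=.
by rewrite ltr_pdivrMr // [pi * _]mulrC ltr_pM2r.
Qed.

Lemma sij_gt0 (R : realType) (theta : nat -> R) (i j : nat) :
  0 < theta i -> theta i < theta j -> theta j < 180 -> 0 < sij theta i j.
Proof. by move=> *; apply: sind_gt0; apply/andP; split; lra. Qed.

Section S8Simplex.
Variables (R : realType) (theta : nat -> R).
Local Notation s := (sij theta).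

Lemma mulmx_S8_eq0 (x : nat -> R) :
  (\row_(k < 8) x k) *m S8 theta = 0 <->
  [/\ x 1 * s 2 9 = x 0 * s 3 5, x 4 * s 1 7 = x 0 * s 5 8,
      x 2 * s 4 6 = x 1 * s 8 9, x 6 * s 1 5 = x 1 * s 2 8 &
      [/\ x 5 * s 1 7 = x 2 * s 2 6, x 3 * s 7 10 = x 2 * s 2 4 &
          x 7 * s 1 5 = x 3 * s 6 7]].
Proof.
have colE j : ((\row_(k < 8) x k) *m S8 theta) ord0 j =
    \sum_(0 <= k < 8) x k * S8_entry theta k j.
  by rewrite mxE big_mkord; apply: eq_bigr => k _; rewrite !mxE.
split=> [x_dep|].
  have col j (lt_j7 : (j < 7)%N) : \sum_(0 <= k < 8) x k * S8_entry theta k j = 0.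
    by rewrite -[j]/(Ordinal lt_j7 : nat) -colE x_dep mxE.
  have := col 0%N isT; have := col 1%N isT; have := col 2%N isT; have := col 3%N isT.
  have := col 4%N isT; have := col 5%N isT; have := col 6%N isT.
  rewrite /= !big_nat_recl // big_geq //= !(mulr0, mul0r, add0r, addr0).
  by move=> e7 e6 e1 e3 e5 e4 e2; split; [lra.. | split; lra].
move=> eqs; have [e1 e4 e2 e6 [e5 e3 e7]] := eqs.
apply/matrixP=> i j; rewrite (ord1 i) colE mxE.
case: j => [[|[|[|[|[|[|[|//]]]]]]] ?];
  rewrite /= !big_nat_recl // big_geq //= !(mulr0, mul0r, add0r, addr0); lra.
Qed.

(* The solution of the equations of [mulmx_S8_eq0] with x_0 = 1, propagated
   along the tree 0-1, 0-4, 1-2, 1-6, 2-5, 2-3, 3-7. *)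
Definition S8_dep (k : nat) : R :=
  let x1 := s 3 5 / s 2 9 in
  let x2 := x1 * s 8 9 / s 4 6 in
  let x3 := x2 * s 2 4 / s 7 10 in
  match k with
  | 0 => 1
  | 1 => x1
  | 2 => x2
  | 3 => x3
  | 4 => s 5 8 / s 1 7
  | 5 => x2 * s 2 6 / s 1 7
  | 6 => x1 * s 2 8 / s 1 5
  | _ => x3 * s 6 7 / s 1 5
  end.

Hypothesis theta_ordered : forall i j k : nat, (i, j, k) \in S8_triples ->
  0 < theta i /\ theta i < theta j /\ theta j < theta k /\ theta k < 180.

Lemma sij_triple_gt0 (i j k : nat) : (i, j, k) \in S8_triples ->
  [/\ 0 < s i j, 0 < s j k & 0 < s i k].
Proof.
move=> /theta_ordered[? [? [? ?]]].
by split; apply: sij_gt0 => //; lra.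
Qed.

Lemma S8_pivot_gt0 : [/\ 0 < s 2 9, 0 < s 1 7, 0 < s 4 6, 0 < s 1 5 & 0 < s 7 10].
Proof.
have [_ s46 _] := sij_triple_gt0 2 4 6 isT.
have [s15 _ _] := sij_triple_gt0 1 5 9 isT.
have [_ _ s17] := sij_triple_gt0 1 5 7 isT.
have [_ _ s29] := sij_triple_gt0 2 8 9 isT.
by have [_ s710 _] := sij_triple_gt0 6 7 10 isT.
Qed.

Lemma S8_dep_gt0 (k : nat) : 0 < S8_dep k.
Proof.
have [s24 s46 s26] := sij_triple_gt0 2 4 6 isT.
have [s15 _ _] := sij_triple_gt0 1 5 9 isT.
have [_ _ s17] := sij_triple_gt0 1 5 7 isT.
have [s35 s58 _] := sij_triple_gt0 3 5 8 isT.
have [s28 s89 s29] := sij_triple_gt0 2 8 9 isT.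
have [s67 s710 _] := sij_triple_gt0 6 7 10 isT.
by case: k => [|[|[|[|[|[|[|k]]]]]]]; rewrite /S8_dep;
  do ?[exact: ltr01 | assumption | apply: divr_gt0 | apply: mulr_gt0].
Qed.

Lemma S8_dep_mulmx : (\row_(k < 8) S8_dep k) *m S8 theta = 0.
Proof.
have [s29 s17 s46 s15 s710] := S8_pivot_gt0.
apply/mulmx_S8_eq0; rewrite /S8_dep /=.
by split; last split; rewrite divfK ?mul1r // lt0r_neq0.
Qed.

Lemma S8_dep_root_eq0 (x : nat -> R) :
  (\row_(k < 8) x k) *m S8 theta = 0 -> x 0 = 0 -> \row_(k < 8) x k = 0.
Proof.
have [s29 s17 s46 s15 s710] := S8_pivot_gt0.
have child_eq0 (y z a b : R) : 0 < a -> y * a = z * b -> z = 0 -> y = 0.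
  by move=> a_gt0 e z0; apply/(mulIf (lt0r_neq0 a_gt0)); rewrite e z0 !mul0r.
case/mulmx_S8_eq0=> e1 e4 e2 e6 [e5 e3 e7] x0.
have x1 := child_eq0 _ _ _ _ s29 e1 x0; have x4 := child_eq0 _ _ _ _ s17 e4 x0.
have x2 := child_eq0 _ _ _ _ s46 e2 x1; have x6 := child_eq0 _ _ _ _ s15 e6 x1.
have x5 := child_eq0 _ _ _ _ s17 e5 x2; have x3 := child_eq0 _ _ _ _ s710 e3 x2.
have x7 := child_eq0 _ _ _ _ s15 e7 x3.
apply/matrixP=> i k; rewrite !mxE.
by case: k => [[|[|[|[|[|[|[|[|//]]]]]]]] ?].
Qed.

End S8Simplex.

Theorem lemmal (R : realType) (theta : nat -> R) :
  (forall i j k : nat, (i, j, k) \in S8_triples ->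
     0 < theta i /\ theta i < theta j /\ theta j < theta k /\ theta k < 180) ->
  is_simplex (S8 theta).
Proof.
move=> theta_ordered; set c := \row_(k < 8) S8_dep _ theta k.
have c_dep : c *m S8 theta = 0 by apply: S8_dep_mulmx.
exists c; split=> [i|]; first by rewrite mxE S8_dep_gt0.
split=> // d d_dep; exists (d ord0 ord0).
apply/subr0_eq.
pose x k := d ord0 (inord k) - d ord0 ord0 * S8_dep _ theta k.
have shiftE : d - d ord0 ord0 *: c = \row_(k < 8) x k.
  by apply/matrixP=> i k; rewrite (ord1 i) !mxE /x inord_val.
rewrite shiftE; apply: (S8_dep_root_eq0 _ _ theta_ordered).
  by rewrite -shiftE mulmxBl -scalemxAl d_dep c_dep scaler0 subr0.
have inord0 : inord 0 = ord0 :> 'I_8 by apply: val_inj; exact: inordK.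
by rewrite /x /= inord0 mulr1 subrr.
Qed.
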